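(* Let $\mathcal{U}$ be a finite alphabet, $p_{UX}$ a distribution on $\mathcal{U}\times\mathcal{X}$, and consider the random code ensemble described in the context, where for each $n$ the randomization index $K$ has an arbitrary (possibly non-uniform) distribution $p_{K}^{(n)}$ on $\{1,\dots,2^{nR_r}\}$. If $$\liminf_{n\to\infty}\tfrac1n R_2(K)>I(X;Z|U),$$ then there exists $\beta>0$ such that for all sufficiently large $n$, $$\mathbb{E}_{\mathcal{C}_n}\Big[\mathbb{V}\big(p_{MZ^n},\,p_M\,p_{Z^n}\big)\Big]\le 2^{-\beta n},$$ where the expectation is over the random codebook $\mathcal{C}_n$ and $p_{MZ^n}$ is the joint distribution of $(M,Z^n)$ induced by a given codebook.
   Context: All logarithms are base 2. $W_{YZ|X}$ is a discrete memoryless wiretap channel with finite alphabets, used memorylessly; the joint distribution of $(U,X,Y,Z)$ is $p_{UX}(u,x)W_{YZ|X}(y,z|x)$. Random code ensemble: fix rates $R_0,R,R_r>0$ and $n$. Generate $U^n(i)$, $i\in\{1,\dots,2^{nR_0}\}$, independently, each i.i.d. with law $p_U$; for each $i$, generate $X^n(i,j,k)$, $j\in\{1,\dots,2^{nR}\}$, $k\in\{1,\dots,2^{nR_r}\}$, conditionally independently with law $\prod_{t=1}^n p_{X|U}(\cdot|U_t(i))$. The indices $M_0$ and $M$ are independent and uniform on $\{1,\dots,2^{nR_0}\}$ and $\{1,\dots,2^{nR}\}$, and independent of a randomization index $K\in\{1,\dots,2^{nR_r}\}$; the transmitted word is $X^n(M_0,M,K)$ and $Z^n$ is the eavesdropper's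 output of $W^n$. The variational distance is $\mathbb{V}(p,q)=\sum_a|p(a)-q(a)|$. The Rényi entropy of order two of $K$ is $R_2(K)=-\log\sum_k p_K(k)^2$. *)

From HB Require Import structures.
From Stdlib Require Import ZArith Reals.
From mathcomp Require Import all_boot.

Set Implicit Arguments.
Unset Strict Implicit.
Unset Printing Implicit Defensive.

Local Open Scope R_scope.

Definition rsum (T : finType) (f : T -> R) : R := \big[Rplus/(IZR 0)]_(i : T) f i.
Definition rprod (T : finType) (f : T -> R) : R := \big[Rmult/(IZR 1)]_(i : T) f i.

Definition log2 (x : R) : R := ln x / ln 2.

(* Number of messages 2^{nR}, read as floor(2^{nR}) (>= 1 since R > 0). *)
Definition nbits (n : nat) (r : R) : nat :=
  Z.to_nat (Int_part (Rpower 2 (INR n * r))).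

Definition is_dist (T : finType) (p : T -> R) : Prop :=
  (forall t, 0 <= p t) /\ rsum p = 1.

(* Marginal p_U and conditional p_{X|U} (set to 0 where p_U(u) = 0). *)
Definition pU (U X : finType) (pUX : U -> X -> R) (u : U) : R :=
  rsum (fun x => pUX u x).
Definition pXgU (U X : finType) (pUX : U -> X -> R) (u : U) (x : X) : R :=
  if Req_EM_T (pU pUX u) 0 then 0 else pUX u x / pU pUX u.

Definition WZ (X Y Z : finType) (W : X -> Y -> Z -> R) (x : X) (z : Z) : R :=
  rsum (fun y => W x y z).

Definition pUXZ (U X Y Z : finType) (pUX : U -> X -> R) (W : X -> Y -> Z -> R)
  (u : U) (x : X) (z : Z) : R := pUX u x * WZ W x z.
Definition pUZ (U X Y Z : finType) (pUX : U -> X -> R) (W : X -> Y -> Z -> R)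
  (u : U) (z : Z) : R := rsum (fun x => pUXZ pUX W u x z).

(* Conditional mutual information I(X;Z|U) in bits (0 log 0 = 0). *)
Definition condMI (U X Y Z : finType) (pUX : U -> X -> R) (W : X -> Y -> Z -> R) : R :=
  rsum (fun u => rsum (fun x => rsum (fun z =>
    if Rlt_dec 0 (pUXZ pUX W u x z) then
      pUXZ pUX W u x z *
      log2 (pUXZ pUX W u x z * pU pUX u / (pUX u x * pUZ pUX W u z))
    else 0))).

Definition Renyi2 (T : finType) (p : T -> R) : R :=
  - log2 (rsum (fun k => p k * p k)).

Definition cb_prob (U X : finType) (pUX : U -> X -> R) (n N0 N Nr : nat)
  (ub : {ffun 'I_N0 -> {ffun 'I_n -> U}})
  (xb : {ffun 'I_N0 -> {ffun 'I_N -> {ffun 'I_Nr -> {ffun 'I_n -> X}}}}) : R :=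
  rprod (fun i => rprod (fun t => pU pUX (ub i t))) *
  rprod (fun i => rprod (fun j => rprod (fun k => rprod (fun t =>
     pXgU pUX (ub i t) (xb i j k t))))).

Definition pMZ (X Y Z : finType) (W : X -> Y -> Z -> R) (n N0 N Nr : nat)
  (pK : 'I_Nr -> R)
  (xb : {ffun 'I_N0 -> {ffun 'I_N -> {ffun 'I_Nr -> {ffun 'I_n -> X}}}})
  (m : 'I_N) (z : {ffun 'I_n -> Z}) : R :=
  rsum (fun m0 : 'I_N0 => rsum (fun k : 'I_Nr =>
    / INR N0 * / INR N * pK k * rprod (fun t => WZ W (xb m0 m k t) (z t)))).

Definition leak_V (X Y Z : finType) (W : X -> Y -> Z -> R) (n N0 N Nr : nat)
  (pK : 'I_Nr -> R)
  (xb : {ffun 'I_N0 -> {ffun 'I_N -> {ffun 'I_Nr -> {ffun 'I_n -> X}}}}) : R :=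
  let p := pMZ W pK xb in
  rsum (fun m : 'I_N => rsum (fun z : {ffun 'I_n -> Z} =>
    Rabs (p m z - rsum (fun z' => p m z') * rsum (fun m' => p m' z)))).

Definition expected_leak (U X Y Z : finType) (pUX : U -> X -> R)
  (W : X -> Y -> Z -> R) (n N0 N Nr : nat) (pK : 'I_Nr -> R) : R :=
  rsum (fun ub : {ffun 'I_N0 -> {ffun 'I_n -> U}} =>
  rsum (fun xb : {ffun 'I_N0 -> {ffun 'I_N -> {ffun 'I_Nr -> {ffun 'I_n -> X}}}} =>
    cb_prob pUX ub xb * leak_V W pK xb)).
Arguments expected_leak {U X Y Z} pUX W n N0 N Nr pK.

(* Structure of the proof:
   1. rsum/rprod are big operators; sums over product sets of product weights
      factorize, so expectations over i.i.d. codebooks reduce to one or two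
      coordinates (sum_prod1, sum_prod2, prod_dist_mean1/2, sum_prod_entry_le).
   2. Soft covering (soft_covering): for codewords drawn i.i.d. from mu and
      selected with law pK, the expected L1 distance between the code-induced
      output and the average output is at most sqrt (sum_k pK k^2 * c) plus
      twice the mass where the likelihood ratio exceeds c.  The typical part
      is bounded by Jensen and a second-moment computation, the atypical part
      by linearity of expectation.
   3. Codebook reduction (expected_leak_le): by the triangle inequality the
      variational distance is at most twice an average of cover deviations of
      the sub-codebooks (m0, m), each distributed as in step 2.
   4. Chernoff bound (atyp_mass_le, mgf_le): the atypical mass at level c is
      at most mgf lam ^ n / c ^ lam, and mgf lam <= exp (lam I + 2 lam^2 B^2).
   5. leak_exponential assembles 6 exp (-n lam d / 2) for c = exp (n (I + d));
      the theorem takes d from the Renyi-rate gap, a small tilt lam, and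
      absorbs the constant 6 for large n. *)

From HB Require Import structures.
From Stdlib Require Import ZArith Reals Lra Lia.
From mathcomp Require Import all_boot.
Local Open Scope R_scope.

Lemma Rplus_assoc' : associative Rplus. Proof. move=> x y z; ring. Qed.
Lemma Rmult_assoc' : associative Rmult. Proof. move=> x y z; ring. Qed.
HB.instance Definition _ :=
  Monoid.isComLaw.Build R 0 Rplus Rplus_assoc' Rplus_comm Rplus_0_l.
HB.instance Definition _ :=
  Monoid.isComLaw.Build R 1 Rmult Rmult_assoc' Rmult_comm Rmult_1_l.
HB.instance Definition _ := Monoid.isMulLaw.Build R 0 Rmult Rmult_0_l Rmult_0_r.
HB.instance Definition _ :=
  Monoid.isAddLaw.Build R Rmult Rplus Rmult_plus_distr_r Rmult_plus_distr_l.

Section FiniteSums.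
Variable T : finType.
Implicit Types f g : T -> R.

Lemma rsum_ext f g : (forall t, f t = g t) -> rsum f = rsum g.
Proof. by move=> H; apply: eq_bigr => t _; exact: H. Qed.

Lemma rprod_ext f g : (forall t, f t = g t) -> rprod f = rprod g.
Proof. by move=> H; apply: eq_bigr => t _; exact: H. Qed.

Lemma rsum_le f g : (forall t, f t <= g t) -> rsum f <= rsum g.
Proof.
move=> H; rewrite /rsum.
by elim/big_ind2: _ => [|x1 x2 y1 y2 *|t _]; [lra|lra|exact: H].
Qed.

Lemma rsum_ge0 f : (forall t, 0 <= f t) -> 0 <= rsum f.
Proof. by move=> H; rewrite /rsum; elim/big_ind: _ => [|x y *|t _]; [lra|lra|exact: H]. Qed.

Lemma rprod_ge0 f : (forall t, 0 <= f t) -> 0 <= rprod f.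
Proof. by move=> H; rewrite /rprod; elim/big_ind: _ => [|x y *|t _]; [lra|nra|exact: H]. Qed.

Lemma rprod_gt0 f : (forall t, 0 < f t) -> 0 < rprod f.
Proof.
move=> H; rewrite /rprod.
by elim/big_ind: _ => [|x y *|t _]; [lra|exact: Rmult_lt_0_compat|exact: H].
Qed.

Lemma rprod_le1 f : (forall t, 0 <= f t <= 1) -> rprod f <= 1.
Proof.
move=> H; suff: 0 <= rprod f <= 1 by lra.
by rewrite /rprod; elim/big_ind: _ => [|x y *|t _]; [lra|nra|exact: H].
Qed.

Lemma rsum_plus f g : rsum (fun t => f t + g t) = rsum f + rsum g.
Proof. by rewrite /rsum big_split. Qed.

Lemma rsum_minus f g : rsum (fun t => f t - g t) = rsum f - rsum g.
Proof.
rewrite /Rminus rsum_plus; congr (_ + _).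
by rewrite /rsum; elim/big_rec2: _ => [|t x y _ ->]; lra.
Qed.

Lemma rsum_scal a f : rsum (fun t => a * f t) = a * rsum f.
Proof. by rewrite /rsum big_distrr. Qed.

Lemma rsum_scalr a f : rsum (fun t => f t * a) = rsum f * a.
Proof. by rewrite /rsum big_distrl. Qed.

Lemma rsum_abs f : Rabs (rsum f) <= rsum (fun t => Rabs (f t)).
Proof.
rewrite /rsum; elim/big_rec2: _ => /= [|t x y _ H]; first by rewrite Rabs_R0; lra.
by apply: Rle_trans (Rabs_triang _ _) _; lra.
Qed.

Lemma rsum0 : rsum (fun _ : T => 0) = 0.
Proof. by rewrite /rsum; elim/big_rec: _ => // *; lra. Qed.

Lemma rprod_mult f g : rprod (fun t => f t * g t) = rprod f * rprod g.
Proof. by rewrite /rprod big_split. Qed.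

Lemma rprod_inv f : rprod (fun t => / f t) = / rprod f.
Proof.
by rewrite /rprod; elim/big_rec2: _ => [|t y1 y2 _ ->]; rewrite ?Rinv_1 ?Rinv_mult.
Qed.

Lemma rprod1 : rprod (fun _ : T => 1) = 1.
Proof. by rewrite /rprod; elim/big_rec: _ => // *; lra. Qed.

Lemma rsum_D1 f t0 : rsum f = f t0 + rsum (fun t => if t == t0 then 0 else f t).
Proof.
rewrite /rsum (bigD1 t0) //= [in RHS](bigD1 t0) //= eqxx Rplus_0_l; congr (_ + _).
by apply: eq_bigr => i /negbTE ->.
Qed.

Lemma rprod_D1 f t0 : rprod f = f t0 * rprod (fun t => if t == t0 then 1 else f t).
Proof.
rewrite /rprod (bigD1 t0) //= [in RHS](bigD1 t0) //= eqxx Rmult_1_l; congr (_ * _).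
by apply: eq_bigr => i /negbTE ->.
Qed.

Lemma rsum_term_le f t0 : (forall t, 0 <= f t) -> f t0 <= rsum f.
Proof.
move=> H; rewrite (rsum_D1 f t0).
suff: 0 <= rsum (fun t => if t == t0 then 0 else f t) by lra.
by apply: rsum_ge0 => t; case: (t == t0) => //; lra.
Qed.

Lemma rprod_neq0 f t0 : rprod f <> 0 -> f t0 <> 0.
Proof. by rewrite (rprod_D1 f t0) => H E; apply: H; rewrite E; lra. Qed.

Lemma rsum_eq0 f t0 : (forall t, 0 <= f t) -> rsum f = 0 -> f t0 = 0.
Proof. by move=> H E; have := rsum_term_le f t0 H; have := H t0; lra. Qed.

Lemma rprod_Rpower f a :
  (forall t, 0 < f t) -> rprod (fun t => Rpower (f t) a) = Rpower (rprod f) a.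
Proof.
move=> H; rewrite /rprod.
suff: 0 < \big[Rmult/1]_(t : T) f t /\
   \big[Rmult/1]_(t : T) Rpower (f t) a = Rpower (\big[Rmult/1]_(t : T) f t) a by case.
elim/big_rec2: _ => [|t y1 y2 _ [h1 h2]].
  by split; [lra| rewrite /Rpower ln_1 Rmult_0_r exp_0].
by split; [exact: Rmult_lt_0_compat| rewrite h2 Rpower_mult_distr].
Qed.

End FiniteSums.

Arguments rsum_ext {T}.
Arguments rprod_ext {T}.
Arguments rsum_le {T}.
Arguments rsum_ge0 {T}.
Arguments rprod_ge0 {T}.
Arguments rsum_scal {T}.
Arguments rsum_scalr {T}.
Arguments rprod_mult {T}.
Arguments rsum_term_le {T}.
Arguments rsum_D1 {T}.
Arguments rprod_D1 {T}.
Arguments rprod_neq0 {T}.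
Arguments rsum_eq0 {T}.

Lemma rsum_swap (A B : finType) (f : A -> B -> R) :
  rsum (fun a => rsum (fun b => f a b)) = rsum (fun b => rsum (fun a => f a b)).
Proof. exact: exchange_big. Qed.

Lemma rsum_const_ord N c : rsum (fun _ : 'I_N => c) = INR N * c.
Proof.
rewrite /rsum big_const_ord; elim: N => [|N IH] /=; first lra.
by rewrite IH; case: N {IH} => [|N] /=; ring.
Qed.

Lemma rprod_const_ord n a : rprod (fun _ : 'I_n => a) = a ^ n.
Proof. by rewrite /rprod big_const_ord; elim: n => [|n IH] /=; [lra|rewrite IH]. Qed.

Lemma rsum_swap4 (A B C D : finType) (f : A -> B -> C -> D -> R) :
  rsum (fun a => rsum (fun b => rsum (fun c => rsum (fun d => f a b c d)))) =
  rsum (fun c => rsum (fun d => rsum (fun a => rsum (fun b => f a b c d)))).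
Proof.
transitivity (rsum (fun a => rsum (fun c => rsum (fun b => rsum (fun d => f a b c d))))).
  by apply: rsum_ext => a; rewrite rsum_swap.
rewrite rsum_swap; apply: rsum_ext => c.
transitivity (rsum (fun a => rsum (fun d => rsum (fun b => f a b c d)))).
  by apply: rsum_ext => a; rewrite rsum_swap.
by rewrite rsum_swap.
Qed.

(* exp y <= 1 + y + 2 y^2 for y <= 1/2, from exp (-y) >= 1 - y. *)
Lemma exp_quad y : y <= 1/2 -> exp y <= 1 + y + 2 * (y * y).
Proof.
move=> y_le; have pos : 0 < 1 - y by lra.
rewrite -[exp y]Rinv_inv -exp_Ropp.
apply: Rle_trans (_ : / (1 - y) <= _).
  by apply: Rinv_le_contravar => //; have := exp_ineq1_le (- y); lra.
apply: (Rmult_le_reg_l (1 - y)) => //; rewrite Rinv_r; last lra.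
have : 0 <= y * y * (1 - 2 * y) by apply: Rmult_le_pos; [exact: Rle_0_sqr|lra].
nra.
Qed.

Lemma ln2_gt0 : 0 < ln 2.
Proof. by have := ln_lt_2; lra. Qed.

Lemma exp_le a b : a <= b -> exp a <= exp b.
Proof. by case/Rle_lt_or_eq_dec => [lt|->]; [left; exact: exp_increasing|lra]. Qed.

Lemma exp_pow a n : exp a ^ n = exp (INR n * a).
Proof.
elim: n => [|n IH]; first by rewrite /= Rmult_0_l exp_0.
by rewrite -tech_pow_Rmult IH -exp_plus S_INR; congr exp; ring.
Qed.

Lemma sum_ffun_prod (I T : finType) (w : I -> T -> R) :
  rsum (fun f : {ffun I -> T} => rprod (fun i => w i (f i))) =
  rprod (fun i => rsum (w i)).
Proof. by rewrite /rsum /rprod bigA_distr_bigA. Qed.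

Section ProductWeights.
Variables (I T : finType) (w : I -> T -> R).

Lemma rprod_others1 (s : I -> R) (P : pred I) :
  (forall i, ~~ P i -> s i = 1) -> rprod (fun i => if P i then 1 else s i) = 1.
Proof.
move=> H; rewrite -[RHS](rprod1 I); apply: rprod_ext => i.
by case E: (P i) => //; rewrite H ?E.
Qed.

Lemma rprod_others_bounds (s : I -> R) (P : pred I) :
  (forall i, ~~ P i -> 0 <= s i <= 1) ->
  0 <= rprod (fun i => if P i then 1 else s i) <= 1.
Proof.
move=> H; split.
  by apply: rprod_ge0 => i; case E: (P i); [lra|have := H i; rewrite E => /(_ isT); lra].
by apply: rprod_le1 => i; case E: (P i); [lra|apply: H; rewrite E].
Qed.

Lemma sum_prod1 i0 (g : T -> R) :
  rsum (fun f : {ffun I -> T} => rprod (fun i => w i (f i)) * g (f i0)) =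
  rsum (fun t => w i0 t * g t) * rprod (fun i => if i == i0 then 1 else rsum (w i)).
Proof.
pose w' i t := if i == i0 then w i t * g t else w i t.
transitivity (rsum (fun f : {ffun I -> T} => rprod (fun i => w' i (f i)))).
  apply: rsum_ext => f; rewrite (rprod_D1 _ i0) [in RHS](rprod_D1 _ i0) /w' eqxx.
  rewrite (rprod_ext (fun t => if t == i0 then 1 else if t == i0 then _ else _)
                     (fun t => if t == i0 then 1 else w t (f t))); first ring.
  by move=> i; case: (i == i0).
rewrite sum_ffun_prod (rprod_D1 _ i0) /w' eqxx; congr (_ * _).
by apply: rprod_ext => i; case: (i == i0).
Qed.

Lemma sum_prod2 k l (g1 g2 : T -> R) : k != l ->
  rsum (fun f : {ffun I -> T} => rprod (fun i => w i (f i)) * (g1 (f k) * g2 (f l))) =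
  rsum (fun t => w k t * g1 t) * rsum (fun t => w l t * g2 t) *
  rprod (fun i => if (i == k) || (i == l) then 1 else rsum (w i)).
Proof.
move=> nkl.
pose w' i t := if i == k then w i t * g1 t else if i == l then w i t * g2 t else w i t.
have lk : (l == k) = false by apply/negbTE; rewrite eq_sym.
transitivity (rsum (fun f : {ffun I -> T} => rprod (fun i => w' i (f i)))).
  apply: rsum_ext => f; rewrite (rprod_D1 _ k) [in RHS](rprod_D1 _ k) /w' eqxx.
  rewrite (rprod_D1 _ l) [X in _ = _ * X](rprod_D1 _ l) lk eqxx.
  rewrite (rprod_ext (fun t => if t == l then 1 else if t == k then 1 else _)
     (fun t => if t == l then 1 else if t == k then 1 else w t (f t))); first ring.
  by move=> i; case: (i == l); case: (i == k).
rewrite sum_ffun_prod (rprod_D1 _ k) /w' eqxx (rprod_D1 _ l) lk eqxx.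
rewrite -!Rmult_assoc; congr (_ * _).
by apply: rprod_ext => i; case: (i == l); case: (i == k).
Qed.

Hypothesis w_ge0 : forall i t, 0 <= w i t.

Lemma sum_prod1_le i0 (g : T -> R) :
  (forall t, 0 <= g t) -> (forall i, i != i0 -> rsum (w i) <= 1) ->
  rsum (fun f : {ffun I -> T} => rprod (fun i => w i (f i)) * g (f i0)) <=
  rsum (fun t => w i0 t * g t).
Proof.
move=> g0 w1; rewrite sum_prod1.
have h1 : 0 <= rsum (fun t => w i0 t * g t).
  by apply: rsum_ge0 => t; apply: Rmult_le_pos.
have [] := @rprod_others_bounds (fun i => rsum (w i)) (fun i => i == i0).
  by move=> i /= Hi; split; [exact: rsum_ge0|exact: w1].
move=> p0 p1; have := Rmult_le_compat_l _ _ _ h1 p1; lra.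
Qed.

End ProductWeights.

Section ProductDistribution.
Variables (I T : finType) (mu : T -> R).
Hypothesis mu1 : rsum mu = 1.

Lemma prod_dist_sum1 :
  rsum (fun f : {ffun I -> T} => rprod (fun i => mu (f i))) = 1.
Proof. by rewrite (@sum_ffun_prod I T (fun _ => mu)) -[RHS](rprod1 I); apply: rprod_ext. Qed.

Lemma prod_dist_mean1 i0 (g : T -> R) :
  rsum (fun f : {ffun I -> T} => rprod (fun i => mu (f i)) * g (f i0)) =
  rsum (fun t => mu t * g t).
Proof.
by rewrite (@sum_prod1 I T (fun _ => mu)) (@rprod_others1 I (fun _ => rsum mu)) ?Rmult_1_r.
Qed.

Lemma prod_dist_mean2 k l (g1 g2 : T -> R) : k != l ->
  rsum (fun f : {ffun I -> T} => rprod (fun i => mu (f i)) * (g1 (f k) * g2 (f l))) =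
  rsum (fun t => mu t * g1 t) * rsum (fun t => mu t * g2 t).
Proof.
move=> nkl.
by rewrite (@sum_prod2 I T (fun _ => mu)) // (@rprod_others1 I (fun _ => rsum mu)) ?Rmult_1_r.
Qed.

End ProductDistribution.
Arguments prod_dist_sum1 {I T mu}.
Arguments prod_dist_mean1 {I T mu}.
Arguments prod_dist_mean2 {I T mu}.

Lemma prod_weight_sum_le1 (I T : finType) (w : I -> T -> R) :
  (forall i t, 0 <= w i t) -> (forall i, rsum (w i) <= 1) ->
  rsum (fun f : {ffun I -> T} => rprod (fun i => w i (f i))) <= 1.
Proof.
move=> w_ge0 w_le1; rewrite sum_ffun_prod.
by apply: rprod_le1 => i; split; [exact: rsum_ge0|exact: w_le1].
Qed.

Lemma sum_prod_entry_le (I J T : finType) (w : I -> T -> R) i0 j0 (g : T -> R) :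
  (forall i t, 0 <= w i t) -> (forall i, rsum (w i) <= 1) -> (forall t, 0 <= g t) ->
  rsum (fun f : {ffun I -> {ffun J -> T}} =>
    rprod (fun i => rprod (fun j => w i (f i j))) * g (f i0 j0)) <=
  rsum (fun t => w i0 t * g t).
Proof.
move=> w_ge0 w_le1 g_ge0.
pose v i (y : {ffun J -> T}) := rprod (fun j => w i (y j)).
have v_ge0 i y : 0 <= v i y by apply: rprod_ge0.
apply: Rle_trans (_ : rsum (fun y : {ffun J -> T} => v i0 y * g (y j0)) <= _).
  apply: (@sum_prod1_le _ _ v v_ge0 i0 (fun y => g (y j0))) => // i _.
  exact: (@prod_weight_sum_le1 J T (fun _ => w i)).
exact: sum_prod1_le.
Qed.

Section Moments.
Variables (A : finType) (pi : A -> R).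
Hypotheses (pi_ge0 : forall a, 0 <= pi a) (pi_sum1 : rsum pi = 1).

Lemma mean_abs_le_sqrt (y : A -> R) :
  rsum (fun a => pi a * Rabs (y a)) <= sqrt (rsum (fun a => pi a * (y a * y a))).
Proof.
set m := rsum (fun a => pi a * Rabs (y a)).
have m0 : 0 <= m by apply: rsum_ge0 => a; apply: Rmult_le_pos; [|exact: Rabs_pos].
have var_ge0 : 0 <= rsum (fun a => pi a * ((Rabs (y a) - m) * (Rabs (y a) - m))).
  by apply: rsum_ge0 => a; apply: Rmult_le_pos; [|exact: Rle_0_sqr].
have expand : rsum (fun a => pi a * ((Rabs (y a) - m) * (Rabs (y a) - m))) =
    rsum (fun a => pi a * (y a * y a)) - 2 * m * m + m * m * rsum pi.
  transitivity (rsum (fun a =>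
      pi a * (y a * y a) - 2 * m * (pi a * Rabs (y a)) + m * m * pi a)).
    apply: rsum_ext => a.
    have <- : Rabs (y a) * Rabs (y a) = y a * y a.
      by rewrite -Rabs_mult Rabs_pos_eq //; exact: Rle_0_sqr.
    ring.
  by rewrite rsum_plus rsum_minus !rsum_scal -/m.
rewrite expand pi_sum1 in var_ge0.
by rewrite -(sqrt_square m) //; apply: sqrt_le_1_alt; lra.
Qed.

Lemma variance_le (h : A -> R) :
  let m := rsum (fun a => pi a * h a) in
  rsum (fun a => pi a * ((h a - m) * (h a - m))) <= rsum (fun a => pi a * (h a * h a)).
Proof.
move=> m; have : 0 <= m * m by exact: Rle_0_sqr.
suff -> : rsum (fun a => pi a * ((h a - m) * (h a - m))) =
    rsum (fun a => pi a * (h a * h a)) - m * m by lra.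
transitivity (rsum (fun a => pi a * (h a * h a) - 2 * m * (pi a * h a) + m * m * pi a)).
  by apply: rsum_ext => a; ring.
by rewrite rsum_plus rsum_minus !rsum_scal -/m pi_sum1; ring.
Qed.

End Moments.
Arguments mean_abs_le_sqrt {A pi}.
Arguments variance_le {A pi}.

Lemma sqrt_amgm a b : 0 <= a -> 0 <= b -> sqrt (a * b) <= (a + b) / 2.
Proof.
move=> a0 b0; rewrite -(sqrt_square ((a + b) / 2)); last lra.
by apply: sqrt_le_1_alt; have := Rle_0_sqr (a - b); rewrite /Rsqr; lra.
Qed.

(* Second moment of a weighted average of i.i.d. centered samples h(xs k):
   E[(sum_k pK k h(xs k))^2] = (sum_k pK k^2) E[h^2], the cross terms vanish. *)
Lemma second_moment (Xn K : finType) (mu : Xn -> R) (pK : K -> R) (h : Xn -> R) :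
  rsum mu = 1 -> rsum (fun x => mu x * h x) = 0 ->
  rsum (fun xs : {ffun K -> Xn} => rprod (fun k => mu (xs k)) *
     (rsum (fun k => pK k * h (xs k)) * rsum (fun k => pK k * h (xs k))))
  = rsum (fun k => pK k * pK k) * rsum (fun x => mu x * (h x * h x)).
Proof.
move=> mu1 centered; set V := rsum (fun x => mu x * (h x * h x)).
have cross k l : rsum (fun xs : {ffun K -> Xn} =>
      rprod (fun i => mu (xs i)) * (h (xs k) * h (xs l))) = if l == k then V else 0.
  case: eqP => [->|/eqP nlk]; first exact: (prod_dist_mean1 mu1 k (fun x => h x * h x)).
  by rewrite prod_dist_mean2 1?eq_sym // centered; ring.
transitivity (rsum (fun xs : {ffun K -> Xn} => rsum (fun k => rsum (fun l =>
   pK k * pK l * (rprod (fun i => mu (xs i)) * (h (xs k) * h (xs l))))))).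
  apply: rsum_ext => xs; rewrite -rsum_scalr -rsum_scal; apply: rsum_ext => k.
  by rewrite -!rsum_scal; apply: rsum_ext => l; ring.
rewrite rsum_swap.
transitivity (rsum (fun k => rsum (fun l => pK k * pK l *
   rsum (fun xs : {ffun K -> Xn} => rprod (fun i => mu (xs i)) * (h (xs k) * h (xs l)))))).
  apply: rsum_ext => k; rewrite rsum_swap.
  by apply: rsum_ext => l; rewrite rsum_scal.
rewrite -rsum_scalr; apply: rsum_ext => k.
rewrite (rsum_D1 _ k) cross eqxx (rsum_ext _ (fun _ => 0)) ?rsum0.
  by rewrite Rplus_0_r.
by move=> l; case: ifP => // nlk; rewrite cross nlk; ring.
Qed.

Definition outd (Xn Zn : finType) (mu : Xn -> R) (P : Xn -> Zn -> R) (z : Zn) : R :=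
  rsum (fun x => mu x * P x z).
Arguments outd {Xn Zn}.

Definition typical (Xn Zn : finType) (mu : Xn -> R) (P : Xn -> Zn -> R) (c : R) x z :=
  if Rle_dec (P x z) (c * outd mu P z) then P x z else 0.
Definition atypical (Xn Zn : finType) (mu : Xn -> R) (P : Xn -> Zn -> R) (c : R) x z :=
  if Rle_dec (P x z) (c * outd mu P z) then 0 else P x z.

Arguments typical {Xn Zn}.
Arguments atypical {Xn Zn}.

Section SoftCovering.
Variables (Xn Zn K : finType) (mu : Xn -> R) (P : Xn -> Zn -> R) (pK : K -> R) (c : R).
Hypotheses (mu_ge0 : forall x, 0 <= mu x) (mu_sum1 : rsum mu = 1).
Hypotheses (P_ge0 : forall x z, 0 <= P x z) (P_sum_le1 : forall x, rsum (P x) <= 1).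
Hypotheses (pK_ge0 : forall k, 0 <= pK k) (pK_sum1 : rsum pK = 1) (c_gt0 : 0 < c).

Let Q := outd mu P.
Let P1 := typical mu P c.
Let P2 := atypical mu P c.
Let E1 z := rsum (fun x => mu x * P1 x z).
Let E2 z := rsum (fun x => mu x * P2 x z).
Let S := rsum (fun k => pK k * pK k).
Let pi (xs : {ffun K -> Xn}) := rprod (fun k => mu (xs k)).
Let Y (xs : {ffun K -> Xn}) z := rsum (fun k => pK k * (P1 (xs k) z - E1 z)).

Lemma typical_split x z : P x z = P1 x z + P2 x z.
Proof. by rewrite /P1 /P2 /typical /atypical; case: Rle_dec => ? /=; ring. Qed.

Lemma typical_ge0 x z : 0 <= P1 x z.
Proof. by rewrite /P1 /typical; case: Rle_dec => ? /=; [exact: P_ge0|lra]. Qed.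

Lemma atypical_ge0 x z : 0 <= P2 x z.
Proof. by rewrite /P2 /atypical; case: Rle_dec => ? /=; [lra|exact: P_ge0]. Qed.

Lemma outd_ge0 z : 0 <= Q z.
Proof. by apply: rsum_ge0 => x; apply: Rmult_le_pos. Qed.

Lemma typical_le x z : P1 x z <= c * Q z.
Proof.
rewrite /P1 /typical; case: Rle_dec => //= ?.
by apply: Rmult_le_pos; [lra|exact: outd_ge0].
Qed.

Lemma E1_ge0 z : 0 <= E1 z.
Proof. by apply: rsum_ge0 => x; apply: Rmult_le_pos; [|exact: typical_ge0]. Qed.

Lemma E2_ge0 z : 0 <= E2 z.
Proof. by apply: rsum_ge0 => x; apply: Rmult_le_pos; [|exact: atypical_ge0]. Qed.

Lemma outd_split z : Q z = E1 z + E2 z.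
Proof. by rewrite -rsum_plus; apply: rsum_ext => x; rewrite typical_split; ring. Qed.

Lemma outd_sum_le1 : rsum Q <= 1.
Proof.
rewrite /Q /outd rsum_swap -mu_sum1; apply: rsum_le => x; rewrite rsum_scal.
by have := P_sum_le1 x; have := mu_ge0 x; nra.
Qed.

Lemma pi_ge0 xs : 0 <= pi xs.
Proof. exact: rprod_ge0. Qed.

(* Pointwise in z, the centered typical output has small mean deviation:
   its variance is at most S * E[P1^2] <= S * c * Q z * E1 z. *)
Lemma typical_deviation_at z :
  rsum (fun xs => pi xs * Rabs (Y xs z)) <= sqrt (S * c) * ((Q z + E1 z) / 2).
Proof.
pose h x := P1 x z - E1 z.
have h_centered : rsum (fun x => mu x * h x) = 0.
  rewrite /h (_ : rsum _ = E1 z - E1 z * rsum mu); first by rewrite mu_sum1; ring.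
  by rewrite -rsum_scal -rsum_minus; apply: rsum_ext => x; ring.
have var_le : rsum (fun x => mu x * (h x * h x)) <= c * Q z * E1 z.
  apply: Rle_trans (variance_le mu_sum1 (fun x => P1 x z)) _.
  rewrite -rsum_scal; apply: rsum_le => x.
  rewrite (_ : c * Q z * _ = mu x * (P1 x z * (c * Q z))); last ring.
  apply: Rmult_le_compat_l => //; apply: Rmult_le_compat_l; first exact: typical_ge0.
  exact: typical_le.
have S_ge0 : 0 <= S by apply: rsum_ge0 => k; exact: Rle_0_sqr.
apply: Rle_trans (mean_abs_le_sqrt pi_ge0 (prod_dist_sum1 mu_sum1) (fun xs => Y xs z)) _.
rewrite /pi /Y (@second_moment _ _ mu pK h mu_sum1 h_centered) -/S.
apply: Rle_trans (_ : sqrt (S * c * (Q z * E1 z)) <= _).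
  apply: sqrt_le_1_alt; rewrite (_ : S * c * _ = S * (c * Q z * E1 z)); last ring.
  exact: Rmult_le_compat_l.
have QE_ge0 : 0 <= Q z * E1 z by apply: Rmult_le_pos; [exact: outd_ge0|exact: E1_ge0].
rewrite sqrt_mult //; last by apply: Rmult_le_pos; lra.
apply: Rmult_le_compat_l; first exact: sqrt_pos.
by apply: sqrt_amgm; [exact: outd_ge0|exact: E1_ge0].
Qed.

Lemma typical_deviation :
  rsum (fun xs => pi xs * rsum (fun z => Rabs (Y xs z))) <= sqrt (S * c).
Proof.
have avg_le1 : rsum (fun z => (Q z + E1 z) / 2) <= 1.
  rewrite (_ : rsum _ = (rsum Q + rsum E1) / 2).
    suff : rsum E1 <= rsum Q by have := outd_sum_le1; lra.
    by apply: rsum_le => z; rewrite outd_split; have := E2_ge0 z; lra.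
  by rewrite /Rdiv -rsum_plus -rsum_scalr; apply: rsum_ext => z; ring.
have avg_ge0 : 0 <= rsum (fun z => (Q z + E1 z) / 2).
  by apply: rsum_ge0 => z; have := outd_ge0 z; have := E1_ge0 z; lra.
rewrite (rsum_ext _ (fun xs => rsum (fun z => pi xs * Rabs (Y xs z)))); last first.
  by move=> xs; rewrite rsum_scal.
rewrite rsum_swap.
apply: Rle_trans (rsum_le _ _ typical_deviation_at) _.
by rewrite rsum_scal; have := sqrt_pos (S * c); nra.
Qed.

Lemma atypical_mean :
  rsum (fun xs => pi xs * rsum (fun z => rsum (fun k => pK k * P2 (xs k) z))) =
  rsum E2.
Proof.
transitivity (rsum (fun z => rsum (fun k => pK k * rsum (fun xs => pi xs * P2 (xs k) z)))).
  transitivity (rsum (fun xs => rsum (fun z => rsum (fun k => pK k * (pi xs * P2 (xs k) z))))).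
    apply: rsum_ext => xs; rewrite -rsum_scal; apply: rsum_ext => z; rewrite -rsum_scal.
    by apply: rsum_ext => k; ring.
  rewrite rsum_swap; apply: rsum_ext => z; rewrite rsum_swap; apply: rsum_ext => k.
  by rewrite rsum_scal.
apply: rsum_ext => z.
rewrite (rsum_ext _ (fun k => pK k * E2 z)); first by rewrite rsum_scalr pK_sum1; ring.
by move=> k; rewrite /pi (prod_dist_mean1 mu_sum1 k (fun x => P2 x z)).
Qed.

Lemma deviation_split (xs : {ffun K -> Xn}) :
  rsum (fun z => Rabs (rsum (fun k => pK k * P (xs k) z) - Q z)) <=
  rsum (fun z => Rabs (Y xs z)) +
  rsum (fun z => rsum (fun k => pK k * P2 (xs k) z)) + rsum E2.
Proof.
rewrite -!rsum_plus; apply: rsum_le => z.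
set b := rsum (fun k => pK k * P2 (xs k) z).
have b_ge0 : 0 <= b by apply: rsum_ge0 => k; apply: Rmult_le_pos; [|exact: atypical_ge0].
have Y_eq : Y xs z = rsum (fun k => pK k * P1 (xs k) z) - E1 z.
  transitivity (rsum (fun k => pK k * P1 (xs k) z - pK k * E1 z)).
    by apply: rsum_ext => k; ring.
  by rewrite rsum_minus rsum_scalr pK_sum1 Rmult_1_l.
have P_eq : rsum (fun k => pK k * P (xs k) z) = rsum (fun k => pK k * P1 (xs k) z) + b.
  by rewrite -rsum_plus; apply: rsum_ext => k; rewrite typical_split; ring.
have -> : rsum (fun k => pK k * P (xs k) z) - Q z = Y xs z + (b - E2 z).
  by rewrite Y_eq P_eq outd_split; ring.
apply: Rle_trans (Rabs_triang _ _) _.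
by have := E2_ge0 z; split_Rabs; lra.
Qed.

Lemma soft_covering :
  rsum (fun xs : {ffun K -> Xn} => rprod (fun k => mu (xs k)) *
     rsum (fun z => Rabs (rsum (fun k => pK k * P (xs k) z) - outd mu P z)))
  <= sqrt (rsum (fun k => pK k * pK k) * c) +
     2 * rsum (fun z => rsum (fun x => mu x * atypical mu P c x z)).
Proof.
apply: Rle_trans (_ : rsum (fun xs => pi xs * (rsum (fun z => Rabs (Y xs z)) +
  rsum (fun z => rsum (fun k => pK k * P2 (xs k) z)) + rsum E2)) <= _).
  by apply: rsum_le => xs; apply: Rmult_le_compat_l; [exact: pi_ge0|exact: deviation_split].
rewrite (rsum_ext _ (fun xs => pi xs * rsum (fun z => Rabs (Y xs z)) +
  pi xs * rsum (fun z => rsum (fun k => pK k * P2 (xs k) z)) + pi xs * rsum E2)); last first.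
  by move=> xs; ring.
rewrite !rsum_plus atypical_mean rsum_scalr (prod_dist_sum1 mu_sum1).
by have := typical_deviation; rewrite -/S -/E2; lra.
Qed.

End SoftCovering.

Lemma leak_reference (M Zt : finType) (p : M -> Zt -> R) (a : M -> R) (r : Zt -> R) :
  (forall m, 0 <= a m) -> rsum a = 1 -> (forall m, rsum (fun z => p m z) = a m) ->
  rsum (fun m => rsum (fun z =>
    Rabs (p m z - rsum (fun z' => p m z') * rsum (fun m' => p m' z))))
  <= 2 * rsum (fun m => rsum (fun z => Rabs (p m z - a m * r z))).
Proof.
move=> a_ge0 a_sum1 p_row.
set T := rsum (fun m => rsum (fun z => Rabs (p m z - a m * r z))).
have triangle : rsum (fun m => rsum (fun z =>
      Rabs (p m z - rsum (fun z' => p m z') * rsum (fun m' => p m' z))))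
    <= T + rsum (fun m => rsum (fun z => a m * Rabs (r z - rsum (fun m' => p m' z)))).
  rewrite /T -rsum_plus; apply: rsum_le => m; rewrite -rsum_plus; apply: rsum_le => z.
  rewrite p_row (_ : p m z - _ =
      (p m z - a m * r z) + a m * (r z - rsum (fun m' => p m' z))); last ring.
  by apply: Rle_trans (Rabs_triang _ _) _; rewrite Rabs_mult (Rabs_pos_eq (a m)) //; lra.
have marginal : rsum (fun m => rsum (fun z => a m * Rabs (r z - rsum (fun m' => p m' z))))
    <= T.
  rewrite rsum_swap /T [X in _ <= X]rsum_swap; apply: rsum_le => z.
  rewrite rsum_scalr a_sum1 Rmult_1_l.
  have -> : r z - rsum (fun m' => p m' z) = - rsum (fun m => p m z - a m * r z).
    by rewrite rsum_minus rsum_scalr a_sum1; ring.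
  by rewrite Rabs_Ropp; exact: rsum_abs.
lra.
Qed.

Definition WZn (X Y Z : finType) (W : X -> Y -> Z -> R) (n : nat)
  (x : {ffun 'I_n -> X}) (z : {ffun 'I_n -> Z}) : R := rprod (fun t => WZ W (x t) (z t)).
Definition pXgUn (U X : finType) (pUX : U -> X -> R) (n : nat)
  (u : {ffun 'I_n -> U}) (x : {ffun 'I_n -> X}) : R := rprod (fun t => pXgU pUX (u t) (x t)).
Definition pUn (U X : finType) (pUX : U -> X -> R) (n : nat) (u : {ffun 'I_n -> U}) : R :=
  rprod (fun t => pU pUX (u t)).
Definition WUZ (U X Y Z : finType) (pUX : U -> X -> R) (W : X -> Y -> Z -> R)
  (u : U) (z : Z) : R :=
  rsum (fun x => pXgU pUX u x * WZ W x z).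
Arguments WZn {X Y Z}.
Arguments pXgUn {U X}.
Arguments pUn {U X}.
Arguments WUZ {U X Y Z}.

Section Model.
Variables (U X Y Z : finType) (pUX : U -> X -> R) (W : X -> Y -> Z -> R).
Hypotheses (pUX_ge0 : forall u x, 0 <= pUX u x)
           (pUX_sum1 : rsum (fun u => rsum (fun x => pUX u x)) = 1).
Hypotheses (W_ge0 : forall x y z, 0 <= W x y z)
           (W_sum1 : forall x, rsum (fun y => rsum (fun z => W x y z)) = 1).

Lemma pU_ge0 u : 0 <= pU pUX u.
Proof. exact: rsum_ge0. Qed.

Lemma pXgU_ge0 u x : 0 <= pXgU pUX u x.
Proof.
rewrite /pXgU; case: Req_EM_T => ? /=; first lra.
apply: Rmult_le_pos => //; apply: Rlt_le; apply: Rinv_0_lt_compat.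
by have := pU_ge0 u; lra.
Qed.

Lemma pXgU_sum1 u : pU pUX u <> 0 -> rsum (fun x => pXgU pUX u x) = 1.
Proof.
move=> H; rewrite /pXgU; case: Req_EM_T => ? //=.
by rewrite /Rdiv rsum_scalr -/(pU pUX u); field.
Qed.

Lemma pXgU_sum_le1 u : rsum (fun x => pXgU pUX u x) <= 1.
Proof.
case: (Req_EM_T (pU pUX u) 0) => H; last by rewrite pXgU_sum1 //; lra.
rewrite (rsum_ext _ (fun _ => 0)) ?rsum0; first lra.
by move=> x; rewrite /pXgU; case: Req_EM_T.
Qed.

Lemma pU_pXgU u x : pU pUX u * pXgU pUX u x = pUX u x.
Proof.
rewrite /pXgU; case: Req_EM_T => H /=; last by field.
by rewrite Rmult_0_r; symmetry; apply: (rsum_eq0 (fun x => pUX u x)).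
Qed.

Lemma WZ_ge0 x z : 0 <= WZ W x z.
Proof. exact: rsum_ge0. Qed.

Lemma WZ_sum1 x : rsum (fun z => WZ W x z) = 1.
Proof. by rewrite /WZ rsum_swap; apply: W_sum1. Qed.

Lemma WZn_ge0 n x z : 0 <= WZn W n x z.
Proof. by apply: rprod_ge0 => t; exact: WZ_ge0. Qed.

Lemma WZn_sum1 n x : rsum (fun z => WZn W n x z) = 1.
Proof.
rewrite /WZn (@sum_ffun_prod _ _ (fun t z => WZ W (x t) z)) -[RHS](rprod1 'I_n).
by apply: rprod_ext => t; exact: WZ_sum1.
Qed.

Lemma pXgUn_ge0 n u x : 0 <= pXgUn pUX n u x.
Proof. by apply: rprod_ge0 => t; exact: pXgU_ge0. Qed.

Lemma pXgUn_sum_le1 n u : rsum (pXgUn pUX n u) <= 1.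
Proof.
rewrite /pXgUn (@sum_ffun_prod _ _ (fun t x => pXgU pUX (u t) x)).
by apply: rprod_le1 => t; split; [apply: rsum_ge0 => x; exact: pXgU_ge0|exact: pXgU_sum_le1].
Qed.

Lemma pXgUn_sum1 n u : pUn pUX n u <> 0 -> rsum (pXgUn pUX n u) = 1.
Proof.
move=> H; rewrite /pXgUn (@sum_ffun_prod _ _ (fun t x => pXgU pUX (u t) x)).
rewrite -[RHS](rprod1 'I_n); apply: rprod_ext => t.
by apply: pXgU_sum1; exact: (rprod_neq0 _ t H).
Qed.

Lemma pUn_ge0 n u : 0 <= pUn pUX n u.
Proof. by apply: rprod_ge0 => t; exact: pU_ge0. Qed.

Lemma pUn_sum1 n : rsum (pUn pUX n) = 1.
Proof.
rewrite /pUn (@sum_ffun_prod _ _ (fun t u => pU pUX u)) -[RHS](rprod1 'I_n).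
by apply: rprod_ext => t; exact: pUX_sum1.
Qed.

Lemma outd_memoryless n u z :
  outd (pXgUn pUX n u) (WZn W n) z = rprod (fun t => WUZ pUX W (u t) (z t)).
Proof.
rewrite /outd /WUZ -(@sum_ffun_prod _ _ (fun t x' => pXgU pUX (u t) x' * WZ W x' (z t))).
by apply: rsum_ext => x; rewrite /pXgUn /WZn -rprod_mult.
Qed.

Definition cover_dev n Nr (pK : 'I_Nr -> R) (u : {ffun 'I_n -> U})
  (xs : {ffun 'I_Nr -> {ffun 'I_n -> X}}) : R :=
  rsum (fun z => Rabs (rsum (fun k => pK k * WZn W n (xs k) z) -
                       outd (pXgUn pUX n u) (WZn W n) z)).
Arguments cover_dev {n Nr}.

Lemma cover_dev_ge0 n Nr pK u xs : 0 <= @cover_dev n Nr pK u xs.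
Proof. by apply: rsum_ge0 => z; exact: Rabs_pos. Qed.

Section FixedCodebook.
Variables (n N0 N Nr : nat) (pK : 'I_Nr -> R).
Variable xb : {ffun 'I_N0 -> {ffun 'I_N -> {ffun 'I_Nr -> {ffun 'I_n -> X}}}}.
Hypotheses (N0_gt0 : (0 < N0)%N) (N_gt0 : (0 < N)%N) (pK_sum1 : rsum pK = 1).

Let weight := / INR N0 * / INR N.

Lemma weight_gt0 : 0 < weight.
Proof.
have pos k : (0 < k)%N -> 0 < / INR k.
  by move=> k0; apply: Rinv_0_lt_compat; apply: lt_0_INR; apply/ltP.
exact: Rmult_lt_0_compat (pos _ N0_gt0) (pos _ N_gt0).
Qed.

Lemma pMZ_expand m z : pMZ W pK xb m z =
  rsum (fun m0 => weight * rsum (fun k => pK k * WZn W n (xb m0 m k) z)).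
Proof.
apply: rsum_ext => m0; rewrite -rsum_scal.
by apply: rsum_ext => k; rewrite /WZn /weight; ring.
Qed.

Lemma pMZ_row m : rsum (fun z => pMZ W pK xb m z) = / INR N.
Proof.
rewrite (rsum_ext _ _ (pMZ_expand m)) rsum_swap.
rewrite (rsum_ext _ (fun _ => weight)) ?rsum_const_ord.
  by rewrite /weight; field; split; apply: not_0_INR; apply/eqP; rewrite -lt0n.
move=> m0; rewrite rsum_scal rsum_swap.
rewrite (rsum_ext _ (fun k => pK k * 1)) ?rsum_scalr ?pK_sum1; first ring.
by move=> k; rewrite rsum_scal WZn_sum1.
Qed.

Lemma leak_bound (ub : {ffun 'I_N0 -> {ffun 'I_n -> U}}) :
  leak_V W pK xb <= 2 * rsum (fun m : 'I_N => rsum (fun m0 : 'I_N0 =>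
      weight * cover_dev pK (ub m0) (xb m0 m))).
Proof.
pose Q m0 z := outd (pXgUn pUX n (ub m0)) (WZn W n) z.
pose r z := / INR N0 * rsum (fun m0 : 'I_N0 => Q m0 z).
have N_inv : rsum (fun _ : 'I_N => / INR N) = 1.
  by rewrite rsum_const_ord; field; apply: not_0_INR; apply/eqP; rewrite -lt0n.
have N_inv_ge0 : forall m : 'I_N, 0 <= / INR N.
  by move=> m; apply: Rlt_le; apply: Rinv_0_lt_compat; apply: lt_0_INR; apply/ltP.
apply: Rle_trans (@leak_reference _ _ (pMZ W pK xb) _ r N_inv_ge0 N_inv pMZ_row) _.
apply: Rmult_le_compat_l; first lra.
rewrite (rsum_ext (fun m => rsum (fun m0 => weight * cover_dev pK (ub m0) (xb m0 m)))
  (fun m => rsum (fun z => rsum (fun m0 => weight *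
     Rabs (rsum (fun k => pK k * WZn W n (xb m0 m k) z) - Q m0 z))))); last first.
  by move=> m; rewrite rsum_swap; apply: rsum_ext => m0; rewrite rsum_scal.
apply: rsum_le => m; apply: rsum_le => z.
rewrite pMZ_expand (_ : / INR N * r z = rsum (fun m0 => weight * Q m0 z)); last first.
  by rewrite /r /weight -!rsum_scal; apply: rsum_ext => m0; ring.
rewrite -rsum_minus; apply: Rle_trans (rsum_abs _ _) _; apply: rsum_le => m0.
rewrite -Rmult_minus_distr_l Rabs_mult Rabs_pos_eq; first lra.
exact: Rlt_le weight_gt0.
Qed.

End FixedCodebook.

Definition avg_cover_dev n Nr (pK : 'I_Nr -> R) : R :=
  rsum (fun u : {ffun 'I_n -> U} => pUn pUX n u *
    rsum (fun xs : {ffun 'I_Nr -> {ffun 'I_n -> X}} =>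
      rprod (fun k => pXgUn pUX n u (xs k)) * cover_dev pK u xs)).

Lemma cb_prob_ge0 n N0 N Nr ub xb : 0 <= @cb_prob U X pUX n N0 N Nr ub xb.
Proof.
apply: Rmult_le_pos; apply: rprod_ge0 => i; first exact: pUn_ge0.
by apply: rprod_ge0 => j; apply: rprod_ge0 => k; exact: pXgUn_ge0.
Qed.

(* Under the random code ensemble each sub-codebook (ub m0, xb m0 m) is
   distributed as in avg_cover_dev (the other entries are marginalized out). *)
Lemma cb_marginal n N0 N Nr (pK : 'I_Nr -> R) (m0 : 'I_N0) (m : 'I_N) :
  rsum (fun ub : {ffun 'I_N0 -> {ffun 'I_n -> U}} =>
  rsum (fun xb : {ffun 'I_N0 -> {ffun 'I_N -> {ffun 'I_Nr -> {ffun 'I_n -> X}}}} =>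
    cb_prob pUX ub xb * cover_dev pK (ub m0) (xb m0 m))) <= avg_cover_dev n Nr pK.
Proof.
pose w u (xs : {ffun 'I_Nr -> {ffun 'I_n -> X}}) := rprod (fun k => pXgUn pUX n u (xs k)).
have w_ge0 u xs : 0 <= w u xs by apply: rprod_ge0 => k; exact: pXgUn_ge0.
have w_le1 u : rsum (w u) <= 1.
  apply: (@prod_weight_sum_le1 _ _ (fun _ => pXgUn pUX n u)) => *.
    exact: pXgUn_ge0.
  exact: pXgUn_sum_le1.
pose inner u := rsum (fun xs => w u xs * cover_dev pK u xs).
have inner_ge0 u : 0 <= inner u.
  by apply: rsum_ge0 => xs; apply: Rmult_le_pos; [|exact: cover_dev_ge0].
apply: Rle_trans (_ : rsum (fun ub : {ffun 'I_N0 -> {ffun 'I_n -> U}} =>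
    rprod (fun i => pUn pUX n (ub i)) * inner (ub m0)) <= _); last first.
  apply: (@sum_prod1_le _ _ (fun i u => pUn pUX n u)) => //.
  - by move=> i u; exact: pUn_ge0.
  - by move=> i _; rewrite pUn_sum1; lra.
apply: rsum_le => ub.
rewrite (rsum_ext _ (fun xb : {ffun 'I_N0 -> {ffun 'I_N -> {ffun 'I_Nr -> {ffun 'I_n -> X}}}}
  =>
  rprod (fun i => pUn pUX n (ub i)) *
  (rprod (fun i => rprod (fun j => w (ub i) (xb i j))) * cover_dev pK (ub m0) (xb m0 m))));
  last by move=> xb; rewrite /cb_prob Rmult_assoc.
rewrite rsum_scal; apply: Rmult_le_compat_l; first by apply: rprod_ge0 => i; exact: pUn_ge0.
rewrite /inner; apply: (@sum_prod_entry_le _ _ _ (fun i => w (ub i)) m0 m) => //.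
exact: cover_dev_ge0.
Qed.

Lemma expected_leak_le n N0 N Nr (pK : 'I_Nr -> R) :
  (0 < N0)%N -> (0 < N)%N -> rsum pK = 1 ->
  expected_leak pUX W n N0 N Nr pK <= 2 * avg_cover_dev n Nr pK.
Proof.
move=> N0_gt0 N_gt0 pK_sum1.
set weight := / INR N0 * / INR N.
have weight_ge0 : 0 <= weight by apply: Rlt_le; exact: weight_gt0.
apply: Rle_trans (_ : rsum (fun ub => rsum (fun xb => cb_prob pUX ub xb *
    (2 * rsum (fun m : 'I_N => rsum (fun m0 : 'I_N0 =>
      weight * cover_dev pK (ub m0) (xb m0 m)))))) <= _).
  apply: rsum_le => ub; apply: rsum_le => xb.
  by apply: Rmult_le_compat_l; [exact: cb_prob_ge0|exact: leak_bound].
apply: Rle_trans (_ : rsum (fun m : 'I_N => rsum (fun m0 : 'I_N0 =>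
    2 * weight * avg_cover_dev n Nr pK)) <= _); last first.
  right; rewrite !rsum_const_ord /weight; field.
  by split; apply: not_0_INR; apply/eqP; rewrite -lt0n.
rewrite (rsum_ext _ (fun ub => rsum (fun xb => rsum (fun m : 'I_N => rsum (fun m0 : 'I_N0 =>
    2 * weight * (cb_prob pUX ub xb * cover_dev pK (ub m0) (xb m0 m))))))); last first.
  move=> ub; apply: rsum_ext => xb; rewrite -rsum_scal -rsum_scal.
  by apply: rsum_ext => m; rewrite -rsum_scal -rsum_scal; apply: rsum_ext => m0; ring.
rewrite rsum_swap4; apply: rsum_le => m; apply: rsum_le => m0.
rewrite (rsum_ext _ (fun ub => 2 * weight * rsum (fun xb =>
    cb_prob pUX ub xb * cover_dev pK (ub m0) (xb m0 m))));
  last by move=> ub; rewrite rsum_scal.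
rewrite rsum_scal; apply: Rmult_le_compat_l; first lra.
exact: cb_marginal.
Qed.

Definition atyp_mass n (c : R) : R :=
  rsum (fun u : {ffun 'I_n -> U} => pUn pUX n u *
    rsum (fun z => rsum (fun x =>
      pXgUn pUX n u x * atypical (pXgUn pUX n u) (WZn W n) c x z))).

(* Soft covering applied to each cloud center with pUn u > 0. *)
Lemma avg_cover_dev_le n Nr (pK : 'I_Nr -> R) c :
  (forall k, 0 <= pK k) -> rsum pK = 1 -> 0 < c ->
  avg_cover_dev n Nr pK <= sqrt (rsum (fun k => pK k * pK k) * c) + 2 * atyp_mass n c.
Proof.
move=> pK_ge0 pK_sum1 c_gt0.
set s := sqrt (rsum (fun k => pK k * pK k) * c).
apply: Rle_trans (_ : rsum (fun u : {ffun 'I_n -> U} => pUn pUX n u * (s +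
   2 * rsum (fun z => rsum (fun x =>
     pXgUn pUX n u x * atypical (pXgUn pUX n u) (WZn W n) c x z)))) <= _).
  apply: rsum_le => u.
  case: (Req_EM_T (pUn pUX n u) 0) => [->|pUn_neq0]; first by rewrite !Rmult_0_l; lra.
  apply: Rmult_le_compat_l; first exact: pUn_ge0.
  apply: soft_covering => //.
  - by move=> x; exact: pXgUn_ge0.
  - exact: pXgUn_sum1.
  - by move=> x z; exact: WZn_ge0.
  - by move=> x; apply: Req_le; exact: WZn_sum1.
right; rewrite (rsum_ext _ (fun u => s * pUn pUX n u + 2 * (pUn pUX n u *
   rsum (fun z => rsum (fun x =>
     pXgUn pUX n u x * atypical (pXgUn pUX n u) (WZn W n) c x z))))); last by move=> u; ring.
by rewrite rsum_plus !rsum_scal pUn_sum1 Rmult_1_r.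
Qed.

(* Information density exp(i(x;z|u)) = W_Z(z|x) / W_{Z|U}(z|u) and the
   corresponding exponential moment of order lam (Chernoff). *)
Definition dens (u : U) (x : X) (z : Z) : R := WZ W x z / WUZ pUX W u z.
Definition mgf (lam : R) : R :=
  rsum (fun u => rsum (fun x => rsum (fun z => pUXZ pUX W u x z * Rpower (dens u x z) lam))).

Lemma pUXZ_ge0 u x z : 0 <= pUXZ pUX W u x z.
Proof. by apply: Rmult_le_pos; [exact: pUX_ge0|exact: WZ_ge0]. Qed.

Lemma mgf_term_ge0 lam u x z : 0 <= pUXZ pUX W u x z * Rpower (dens u x z) lam.
Proof. by apply: Rmult_le_pos; [exact: pUXZ_ge0|exact: Rlt_le (exp_pos _)]. Qed.

Lemma mgf_ge0 lam : 0 <= mgf lam.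
Proof. by do 3 (apply: rsum_ge0 => ?); exact: mgf_term_ge0. Qed.

Lemma support_pos {u x z} : 0 < pUXZ pUX W u x z ->
  [/\ 0 < pUX u x, 0 < WZ W x z & 0 < WUZ pUX W u z].
Proof.
rewrite /pUXZ => q_gt0.
have hx : 0 < pUX u x by have := pUX_ge0 u x; have := WZ_ge0 x z; nra.
have hw : 0 < WZ W x z by have := pUX_ge0 u x; have := WZ_ge0 x z; nra.
have hu : 0 < pU pUX u by apply: Rlt_le_trans hx _; exact: rsum_term_le.
have hg : 0 < pXgU pUX u x.
  by rewrite /pXgU; case: Req_EM_T => ? /=; [lra|exact: Rdiv_lt_0_compat].
split=> //; apply: Rlt_le_trans (_ : pXgU pUX u x * WZ W x z <= _).
  exact: Rmult_lt_0_compat.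
apply: (rsum_term_le (fun x' => pXgU pUX u x' * WZ W x' z)) => x'.
by apply: Rmult_le_pos; [exact: pXgU_ge0|exact: WZ_ge0].
Qed.

Lemma joint_memoryless n
  (u : {ffun 'I_n -> U}) (x : {ffun 'I_n -> X}) (z : {ffun 'I_n -> Z}) :
  pUn pUX n u * (pXgUn pUX n u x * WZn W n x z) =
  rprod (fun t : 'I_n => pUXZ pUX W (u t) (x t) (z t)).
Proof.
rewrite /pUn /pXgUn /WZn -!rprod_mult; apply: rprod_ext => t.
by rewrite -Rmult_assoc pU_pXgU.
Qed.

Lemma dens_memoryless n
  (u : {ffun 'I_n -> U}) (x : {ffun 'I_n -> X}) (z : {ffun 'I_n -> Z}) :
  rprod (fun t => dens (u t) (x t) (z t)) =
  WZn W n x z / outd (pXgUn pUX n u) (WZn W n) z.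
Proof. by rewrite outd_memoryless /dens /Rdiv rprod_mult rprod_inv. Qed.

(* Chernoff bound for one triple (u, x, z): an atypical pair has density
   product above c, so its mass is at most the lam-tilted mass / c^lam. *)
Lemma atypical_chernoff n c lam
  (u : {ffun 'I_n -> U}) (x : {ffun 'I_n -> X}) (z : {ffun 'I_n -> Z}) :
  0 < c -> 0 <= lam ->
  pUn pUX n u * (pXgUn pUX n u x * atypical (pXgUn pUX n u) (WZn W n) c x z) <=
  rprod (fun t => pUXZ pUX W (u t) (x t) (z t) * Rpower (dens (u t) (x t) (z t)) lam) /
  Rpower c lam.
Proof.
move=> c_gt0 lam_ge0.
set Q := outd (pXgUn pUX n u) (WZn W n) z.
have cl_gt0 : 0 < Rpower c lam by exact: exp_pos.
rewrite /atypical -/Q; case: Rle_dec => [_|atyp] /=.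
  rewrite !Rmult_0_r; apply: Rmult_le_pos; last exact: Rlt_le (Rinv_0_lt_compat _ cl_gt0).
  by apply: rprod_ge0 => t; exact: mgf_term_ge0.
rewrite joint_memoryless (rprod_mult (fun t => pUXZ pUX W (u t) (x t) (z t))).
set J := rprod (fun t => pUXZ pUX W (u t) (x t) (z t)).
have J_ge0 : 0 <= J by apply: rprod_ge0 => t; exact: pUXZ_ge0.
case: (Req_EM_T J 0) => [->|J_neq0].
  rewrite Rmult_0_l /Rdiv Rmult_0_l; lra.
have supp t : 0 < pUXZ pUX W (u t) (x t) (z t).
  by have := rprod_neq0 _ t J_neq0; have := pUXZ_ge0 (u t) (x t) (z t); lra.
have dens_gt0 t : 0 < dens (u t) (x t) (z t).
  by case: (support_pos (supp t)) => _ hw hu; exact: Rdiv_lt_0_compat.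
have Q_gt0 : 0 < Q.
  by rewrite /Q outd_memoryless; apply: rprod_gt0 => t; case: (support_pos (supp t)).
have tilt : Rpower c lam <= rprod (fun t => Rpower (dens (u t) (x t) (z t)) lam).
  rewrite rprod_Rpower // dens_memoryless; apply: Rle_Rpower_l => //; split=> //.
  apply: Rlt_le; apply: (Rmult_lt_reg_r Q) => //.
  rewrite /Rdiv Rmult_assoc Rinv_l ?Rmult_1_r; first lra.
  exact: Rgt_not_eq Q_gt0.
have ratio : 1 <= rprod (fun t => Rpower (dens (u t) (x t) (z t)) lam) / Rpower c lam.
  apply: (Rmult_le_reg_r (Rpower c lam)) => //.
  by rewrite /Rdiv Rmult_assoc Rinv_l ?Rmult_1_r ?Rmult_1_l; lra.
rewrite /Rdiv Rmult_assoc.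
by have := Rmult_le_compat_l _ _ _ J_ge0 ratio; rewrite Rmult_1_r.
Qed.

(* Summing the Chernoff bound: the tilted masses factorize over the letters. *)
Lemma atyp_mass_le n c lam : 0 < c -> 0 <= lam ->
  atyp_mass n c <= mgf lam ^ n / Rpower c lam.
Proof.
move=> c_gt0 lam_ge0; rewrite /atyp_mass /Rdiv.
pose F u x z := pUXZ pUX W u x z * Rpower (dens u x z) lam.
apply: Rle_trans (_ : rsum (fun u : {ffun 'I_n -> U} => rsum (fun x : {ffun 'I_n -> X} =>
   rsum (fun z : {ffun 'I_n -> Z} =>
     rprod (fun t => F (u t) (x t) (z t)) * / Rpower c lam))) <= _).
  apply: rsum_le => u; rewrite -rsum_scal rsum_swap; apply: rsum_le => x.
  by rewrite -rsum_scal; apply: rsum_le => z; exact: atypical_chernoff.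
rewrite (rsum_ext _ (fun u : {ffun 'I_n -> U} => rsum (fun x : {ffun 'I_n -> X} =>
   rsum (fun z : {ffun 'I_n -> Z} => rprod (fun t => F (u t) (x t) (z t)))) * / Rpower c lam));
  last by move=> u; rewrite -rsum_scalr; apply: rsum_ext => x; rewrite -rsum_scalr.
rewrite rsum_scalr; apply: Req_le; congr (_ * _).
rewrite (rsum_ext _ (fun u : {ffun 'I_n -> U} =>
   rprod (fun t => rsum (fun x' => rsum (fun z' => F (u t) x' z'))))); last first.
  move=> u; rewrite -(@sum_ffun_prod _ _ (fun t x' => rsum (fun z' => F (u t) x' z'))).
  apply: rsum_ext => x; exact: (@sum_ffun_prod _ _ (fun t z' => F (u t) (x t) z')).
rewrite (@sum_ffun_prod _ _ (fun t u' => rsum (fun x' => rsum (fun z' => F u' x' z')))).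
exact: rprod_const_ord.
Qed.

Definition ldens (u : U) (x : X) (z : Z) : R :=
  if Rlt_dec 0 (pUXZ pUX W u x z) then ln (dens u x z) else 0.
Definition ldens_bound : R :=
  1 + rsum (fun u => rsum (fun x => rsum (fun z => Rabs (ldens u x z)))).

Lemma ldens_bound_ge1 : 1 <= ldens_bound.
Proof.
rewrite /ldens_bound; suff : 0 <= rsum (fun u => rsum (fun x => rsum (fun z =>
  Rabs (ldens u x z)))) by lra.
by do 3 (apply: rsum_ge0 => ?); exact: Rabs_pos.
Qed.

Lemma ldens_abs_le u x z : Rabs (ldens u x z) <= ldens_bound - 1.
Proof.
rewrite /ldens_bound Rplus_minus_l.
pose f u x z := Rabs (ldens u x z).
have f_ge0 u' x' z' : 0 <= f u' x' z' by exact: Rabs_pos.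
apply: Rle_trans (rsum_term_le (fun z' => f u x z') z _) _ => //.
apply: Rle_trans (rsum_term_le (fun x' => rsum (fun z' => f u x' z')) x _) _.
  by move=> x'; exact: rsum_ge0.
apply: (rsum_term_le (fun u' => rsum (fun x' => rsum (fun z' => f u' x' z'))) u).
by move=> u'; apply: rsum_ge0 => x'; exact: rsum_ge0.
Qed.

Lemma pUXZ_sum1 : rsum (fun u => rsum (fun x => rsum (fun z => pUXZ pUX W u x z))) = 1.
Proof.
rewrite -pUX_sum1; apply: rsum_ext => u; apply: rsum_ext => x.
by rewrite /pUXZ rsum_scal WZ_sum1 Rmult_1_r.
Qed.

Lemma pUZ_factor u z : pUZ pUX W u z = pU pUX u * WUZ pUX W u z.
Proof.
rewrite /pUZ /WUZ -rsum_scal; apply: rsum_ext => x.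
by rewrite /pUXZ -Rmult_assoc pU_pXgU.
Qed.

Lemma condMI_ldens : condMI pUX W * ln 2 =
  rsum (fun u => rsum (fun x => rsum (fun z => pUXZ pUX W u x z * ldens u x z))).
Proof.
have ln2_pos := ln2_gt0.
rewrite /condMI -rsum_scalr; apply: rsum_ext => u; rewrite -rsum_scalr.
apply: rsum_ext => x; rewrite -rsum_scalr; apply: rsum_ext => z.
rewrite /ldens; case: Rlt_dec => supp /=; last ring.
have [hx hw hu] := support_pos supp.
have hU : 0 < pU pUX u by apply: Rlt_le_trans hx _; exact: rsum_term_le.
rewrite pUZ_factor (_ : pUXZ pUX W u x z * pU pUX u / _ = dens u x z); last first.
  by rewrite /pUXZ /dens; field; repeat split; lra.
by rewrite /log2; field; lra.
Qed.

Lemma mgf_term_le lam u x z : 0 < lam -> lam * ldens_bound <= 1/2 ->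
  pUXZ pUX W u x z * Rpower (dens u x z) lam <=
  pUXZ pUX W u x z * (1 + lam * ldens u x z + 2 * (lam * lam) * (ldens_bound * ldens_bound)).
Proof.
move=> lam_gt0 small.
case: (Rle_lt_or_eq_dec _ _ (pUXZ_ge0 u x z)) => [supp|<-]; last by rewrite !Rmult_0_l; lra.
apply: Rmult_le_compat_l; first exact: pUXZ_ge0.
have B1 := ldens_bound_ge1.
have hL := ldens_abs_le u x z.
have -> : Rpower (dens u x z) lam = exp (lam * ldens u x z).
  by rewrite /Rpower /ldens; case: Rlt_dec.
have L_sq : ldens u x z * ldens u x z <= ldens_bound * ldens_bound.
  rewrite -[ldens u x z * _]Rabs_pos_eq ?Rabs_mult; last exact: Rle_0_sqr.
  by apply: Rmult_le_compat; try exact: Rabs_pos; lra.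
have y_small : lam * ldens u x z <= 1/2.
  by apply: Rle_trans small; apply: Rmult_le_compat_l; [lra|move: hL; split_Rabs; lra].
apply: Rle_trans (exp_quad _ y_small) _.
have : lam * lam * (ldens u x z * ldens u x z) <= lam * lam * (ldens_bound * ldens_bound).
  by apply: Rmult_le_compat_l => //; nra.
nra.
Qed.

Lemma mgf_le lam : 0 < lam -> lam * ldens_bound <= 1/2 ->
  mgf lam <= exp (lam * ln 2 * condMI pUX W + 2 * (lam * lam) * (ldens_bound * ldens_bound)).
Proof.
move=> lam_gt0 small; set B2 := 2 * (lam * lam) * (ldens_bound * ldens_bound).
apply: Rle_trans (exp_ineq1_le _).
rewrite (_ : lam * ln 2 * condMI pUX W = lam * (condMI pUX W * ln 2)); last ring.
rewrite condMI_ldens.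
apply: Rle_trans (_ : rsum (fun u => rsum (fun x => rsum (fun z =>
   pUXZ pUX W u x z * (1 + lam * ldens u x z + B2)))) <= _).
  by do 3 (apply: rsum_le => ?); exact: mgf_term_le.
set P3 := rsum (fun u => rsum (fun x => rsum (fun z => pUXZ pUX W u x z))).
apply: Req_le; transitivity (P3 + lam * rsum (fun u => rsum (fun x => rsum (fun z =>
    pUXZ pUX W u x z * ldens u x z))) + B2 * P3); last by rewrite /P3 pUXZ_sum1; ring.
rewrite /P3 -!rsum_scal -!rsum_plus; apply: rsum_ext => u.
rewrite -!rsum_scal -!rsum_plus; apply: rsum_ext => x.
by rewrite -!rsum_scal -!rsum_plus; apply: rsum_ext => z; ring.
Qed.

(* The truncation level is c = exp (n (I + d)). *)
Lemma leak_exponential n N0 N Nr (pK : 'I_Nr -> R) lam d :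
  (0 < N0)%N -> (0 < N)%N -> (forall k, 0 <= pK k) -> rsum pK = 1 ->
  0 < lam -> lam * ldens_bound <= 1/2 ->
  2 * (lam * lam) * (ldens_bound * ldens_bound) <= lam * d / 2 ->
  rsum (fun k => pK k * pK k) <= exp (- (INR n * (condMI pUX W * ln 2 + 2 * d))) ->
  expected_leak pUX W n N0 N Nr pK <= 6 * exp (- (INR n * (lam * d / 2))).
Proof.
move=> N0_gt0 N_gt0 pK_ge0 pK_sum1 lam_gt0 small quad collision.
set I := condMI pUX W * ln 2 in collision *.
set B := ldens_bound in small quad *; set r := lam * d / 2.
have B_ge1 : 1 <= B := ldens_bound_ge1.
have lam_le1 : lam <= 1.
  have : lam * 1 <= lam * B by apply: Rmult_le_compat_l; lra.
  lra.
have d_ge0 : 0 <= d by nra.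
have n_ge0 := pos_INR n.
set c := exp (INR n * (I + d)).
have c_gt0 : 0 < c by exact: exp_pos.
have covering : sqrt (rsum (fun k => pK k * pK k) * c) <= exp (- (INR n * r)).
  rewrite -[exp (- _)]sqrt_square; last exact: Rlt_le (exp_pos _).
  apply: sqrt_le_1_alt.
  apply: Rle_trans (Rmult_le_compat_r _ _ _ (Rlt_le _ _ c_gt0) collision) _.
  rewrite /c -!exp_plus; apply: exp_le; rewrite /r.
  have : INR n * d * lam <= INR n * d * 1 by apply: Rmult_le_compat_l; nra.
  nra.
have chernoff : mgf lam ^ n / Rpower c lam <= exp (- (INR n * r)).
  apply: Rle_trans (_ : exp (lam * ln 2 * condMI pUX W + 2 * (lam * lam) * (B * B)) ^ n /
      Rpower c lam <= _).
    apply: Rmult_le_compat_r; first exact: Rlt_le (Rinv_0_lt_compat _ (exp_pos _)).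
    by apply: pow_incr; split; [exact: mgf_ge0|exact: mgf_le].
  rewrite exp_pow /Rpower /c ln_exp /Rdiv -exp_Ropp -exp_plus; apply: exp_le.
  rewrite /r /I; have : INR n * (2 * (lam * lam) * (B * B)) <= INR n * (lam * d / 2).
    exact: Rmult_le_compat_l.
  nra.
have := @expected_leak_le n N0 N Nr pK N0_gt0 N_gt0 pK_sum1.
have := @avg_cover_dev_le n Nr pK c pK_ge0 pK_sum1 c_gt0.
have := @atyp_mass_le n c lam c_gt0 (Rlt_le _ _ lam_gt0).
lra.
Qed.

End Model.

Lemma nbits_gt0 n r : 0 < r -> (0 < nbits n r)%N.
Proof.
move=> r_gt0; rewrite /nbits.
have ge1 : 1 <= Rpower 2 (INR n * r).
  rewrite /Rpower; apply: Rle_trans (exp_ineq1_le _).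
  have : 0 <= INR n * r * ln 2.
    by apply: Rmult_le_pos; [apply: Rmult_le_pos; [exact: pos_INR|lra]|exact: Rlt_le ln2_gt0].
  lra.
have [_ frac] := base_Int_part (Rpower 2 (INR n * r)).
have : (0 < Int_part (Rpower 2 (INR n * r)))%Z by apply: lt_IZR; lra.
by move=> ?; apply/ltP; lia.
Qed.

Lemma collision_le (T : finType) (p : T -> R) (c : R) (n : nat) : (0 < n)%N ->
  c <= Renyi2 p / INR n -> rsum (fun k => p k * p k) <= exp (- (INR n * (c * ln 2))).
Proof.
move=> n_gt0 rate; have n_pos : 0 < INR n by apply: lt_0_INR; apply/ltP.
have ln2_pos := ln2_gt0.
set S := rsum (fun k => p k * p k).
have S_ge0 : 0 <= S by apply: rsum_ge0 => k; exact: Rle_0_sqr.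
case: (Rle_lt_or_eq_dec _ _ S_ge0) => [S_gt0|<-]; last exact: Rlt_le (exp_pos _).
rewrite -(exp_ln S S_gt0); apply: exp_le.
have key : c * (INR n * ln 2) <= - ln S.
  have -> : - ln S = Renyi2 p / INR n * (INR n * ln 2).
    by rewrite /Renyi2 /log2 -/S; field; lra.
  by apply: Rmult_le_compat_r => //; apply: Rmult_le_pos; lra.
nra.
Qed.

Lemma small_tilt_exists (B d : R) : 1 <= B -> 0 < d ->
  exists lam, [/\ 0 < lam, lam * B <= 1/2 & 2 * (lam * lam) * (B * B) <= lam * d / 2].
Proof.
move=> B_ge1 d_gt0; exists (Rmin (1 / (2 * B)) (d / (4 * (B * B)))).
set lam := Rmin _ _.
have B2_gt0 : 0 < B * B by nra.
have lam_gt0 : 0 < lam by apply: Rmin_glb_lt; apply: Rdiv_lt_0_compat; lra.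
split=> //.
  have := Rmin_l (1 / (2 * B)) (d / (4 * (B * B))); rewrite -/lam => le.
  have := Rmult_le_compat_r B _ _ (ltac:(lra)) le.
  by rewrite (_ : 1 / (2 * B) * B = 1 / 2) //; field; lra.
have := Rmin_r (1 / (2 * B)) (d / (4 * (B * B))); rewrite -/lam => le.
have := Rmult_le_compat_r (4 * (B * B)) _ _ (ltac:(lra)) le.
rewrite (_ : d / (4 * (B * B)) * (4 * (B * B)) = d); last by field; lra.
by nra.
Qed.

Lemma exp_decay_eventually (r : R) : 0 < r ->
  exists n1 : nat, forall n : nat, (n1 <= n)%N ->
    6 * exp (- (INR n * r)) <= exp (- (INR n * r / 2)).
Proof.
move=> r_gt0; have [n1 large] := INR_archimed (r / 2) 5 (ltac:(lra)).
exists n1 => n le_n; have n1_le : INR n1 <= INR n by apply: le_INR; apply/leP.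
have six : 6 <= exp (INR n * r / 2).
  apply: Rle_trans (exp_ineq1_le _).
  by have := Rmult_le_compat_r (r / 2) _ _ (ltac:(lra)) n1_le; lra.
have -> : exp (- (INR n * r)) = exp (- (INR n * r / 2)) * / exp (INR n * r / 2).
  by rewrite -exp_Ropp -exp_plus; congr exp; field.
have pos := exp_pos (- (INR n * r / 2)); have pos' := exp_pos (INR n * r / 2).
apply: (Rmult_le_reg_r (exp (INR n * r / 2))) => //.
by field_simplify; nra.
Qed.

Theorem lemma4 (U X Y Z : finType) (pUX : U -> X -> R) (W : X -> Y -> Z -> R)
  (R0 Rm Rr : R) (pK : forall n : nat, 'I_(nbits n Rr) -> R) :
  (forall u x, 0 <= pUX u x) ->
  rsum (fun u => rsum (fun x => pUX u x)) = 1 ->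
  (forall x y z, 0 <= W x y z) ->
  (forall x, rsum (fun y => rsum (fun z => W x y z)) = 1) ->
  0 < R0 -> 0 < Rm -> 0 < Rr ->
  (forall n : nat, is_dist (pK n)) ->
  (* liminf_n (1/n) R_2(K) > I(X;Z|U) *)
  (exists c : R, condMI pUX W < c /\
     exists n0 : nat, forall n : nat, (n0 <= n)%N -> c <= Renyi2 (pK n) / INR n) ->
  exists beta : R, 0 < beta /\
    exists n0 : nat, forall n : nat, (n0 <= n)%N ->
      expected_leak pUX W n (nbits n R0) (nbits n Rm) (nbits n Rr) (pK n)
        <= Rpower 2 (- (beta * INR n)).
Proof.
move=> pUX_ge0 pUX_sum1 W_ge0 W_sum1 R0_gt0 Rm_gt0 _ pK_dist [c [gap [n0 rate]]].
have ln2_pos := ln2_gt0.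
set d := (c - condMI pUX W) * ln 2 / 2.
have d_gt0 : 0 < d by rewrite /d; apply: Rdiv_lt_0_compat; [nra|lra].
have [lam [lam_gt0 small quad]] :=
  small_tilt_exists _ _ (ldens_bound_ge1 _ _ _ _ pUX W) d_gt0.
set r := lam * d / 2.
have r_gt0 : 0 < r by rewrite /r; nra.
have [n1 decay] := exp_decay_eventually _ r_gt0.
exists (r / (2 * ln 2)); split; first by apply: Rdiv_lt_0_compat; lra.
exists (maxn (maxn n0 n1) 1) => n; rewrite !geq_max => /andP[/andP[n0_le n1_le] n_gt0].
rewrite (_ : Rpower 2 _ = exp (- (INR n * r / 2))); last first.
  by rewrite /Rpower; congr exp; field; lra.
apply: Rle_trans (decay n n1_le).
apply: leak_exponential => //; try exact: nbits_gt0; try exact: (pK_dist n).1.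
- exact: (pK_dist n).2.
- rewrite (_ : condMI pUX W * ln 2 + 2 * d = c * ln 2); last by rewrite /d; field.
  exact: collision_le (rate n n0_le).
Qed.
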